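(* Let $m,k$ be positive integers. Define on $\mathbb{F}_{2^m}\times\mathbb{F}_{2^m}$ \[f_1(x,y)=(x^{2^k+1}+xy^{2^k}+y^{2^k+1},\;x^{2^{2k}+1}+x^{2^{2k}}y+y^{2^{2k}+1}),\] \[f_2(x,y)=(x^{2^k+1}+xy^{2^k}+y^{2^k+1},\;x^{2^{3k}}y+xy^{2^{3k}}).\] If $\gcd(3k,m)=1$, then $f_1$ is an almost-3-to-1 APN map. If $\gcd(3k,m)=1$ and $m$ is odd, then $f_2$ is an almost-3-to-1 APN map.
   Context: A map $F$ on $\mathbb{F}_{2^m}\times\mathbb{F}_{2^m}$ (an $\mathbb{F}_2$-vector space) is APN if for every nonzero $a$ and every $b$ the equation $F(z+a)+F(z)=b$ has at most 2 solutions. $F$ is almost-3-to-1 if there is a unique element of its image with exactly one preimage and every other element of the image has exactly 3 preimages. *)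

From mathcomp Require Import all_boot all_algebra all_field.
Set Implicit Arguments. Unset Strict Implicit. Unset Printing Implicit Defensive.
Import GRing.Theory.
Local Open Scope ring_scope.

Definition APN2 (F : finFieldType) (f : F * F -> F * F) : Prop :=
  forall (a b : F * F), (a != 0)%R ->
    (#|[set z : F * F | ((f (z + a)) + f z)%R == b]| <= 2)%N.

Definition almost_3_to_1 (T : finType) (f : T -> T) : Prop :=
  exists y0 : T,
    [/\ y0 \in codom f,
        #|[set z | f z == y0]| = 1%N &
        forall y, y \in codom f -> y != y0 -> #|[set z | f z == y]| = 3%N].

Definition f1 (F : finFieldType) (k : nat) (p : F * F) : F * F :=
  let: (x, y) := p in
  (x ^+ (2 ^ k + 1) + x * y ^+ (2 ^ k) + y ^+ (2 ^ k + 1),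
   x ^+ (2 ^ (2 * k) + 1) + x ^+ (2 ^ (2 * k)) * y + y ^+ (2 ^ (2 * k) + 1)).

Definition f2 (F : finFieldType) (k : nat) (p : F * F) : F * F :=
  let: (x, y) := p in
  (x ^+ (2 ^ k + 1) + x * y ^+ (2 ^ k) + y ^+ (2 ^ k + 1),
   x ^+ (2 ^ (3 * k)) * y + x * y ^+ (2 ^ (3 * k))).

From mathcomp Require Import all_boot all_algebra all_field.
From mathcomp Require Import ring.
Set Implicit Arguments. Unset Strict Implicit. Unset Printing Implicit Defensive.
Import GRing.Theory.
Local Open Scope ring_scope.

(* Let F be a field with 2^m elements, q = 2^k, and write x^[j] for the
   Frobenius power x ^+ 2^j.  Both maps have the shape
     f1 = (Q_k(x,y), Q_2k(y,x)),   f2 = (Q_k(x,y), B_3k(x,y)),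
   where Q_j(x,y) = x^[j] x + x y^[j] + y^[j] y and B_j(x,y) = x^[j] y + x y^[j].  If f on F x F is
      invariant under the order-3 map rot (x,y) = (y,x+y), bihomogeneous, and
      its polar form D_a(z) = f(z+a) + f(z) + f(a) is additive in z with kernel
      {0, (c,1)} at every a = (c,1), then every kernel of D_a (a <> 0) is {0,a};
      hence f is APN, and its fibres are exactly the rot-orbits, so f is
      almost 3-to-1.
   2. Anisotropy (Section Anisotropy).  When gcd(3j,m) = 1 the form Q_j has no
      nontrivial zero; consequently a q-linear relation whose coefficients are
      values of Q_j on two vectors (a,g), (b,d) with ad + bg <> 0 forces t = 0.
   3. Kernels (Section Kernels).  Writing x = e + c y, the equations
      D_(c,1)(x,y) = 0 become q-linear equations in e; eliminating y yields such
      an anisotropic relation, so e = 0 and then y is in F_2. *)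

Section Char2Ring.
Variable R : comNzRingType.
Hypothesis pchar2 : 2 \in [pchar R].

Lemma char2_consts : [/\ (2%:R : R) = 0, (3%:R : R) = 1 & (4%:R : R) = 0].
Proof.
have two0 : (2%:R : R) = 0 := pcharf0 pchar2.
by split; rewrite ?(natrD _ 2 1) ?(natrD _ 2 2) two0 ?add0r.
Qed.

Lemma char2_eq (x y : R) : x + y = 0 -> x = y.
Proof. by move/eqP; rewrite addr_eq0 oppr_pchar2 // => /eqP. Qed.

Definition frob (n : nat) (x : R) : R := x ^+ (2 ^ n).

Lemma frobD n x y : frob n (x + y) = frob n x + frob n y.
Proof. by apply: exprDn_pchar; rewrite pnatX (pnatE _ (pcharf_prime pchar2)) pchar2. Qed.

Lemma frobM n x y : frob n (x * y) = frob n x * frob n y.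
Proof. exact: exprMn. Qed.

Lemma frob1 n : frob n 1 = 1.
Proof. exact: expr1n. Qed.

Lemma frob0 n : frob n 0 = 0.
Proof. by rewrite /frob expr0n expn_eq0. Qed.

Lemma frob_add n p x : frob (n + p) x = frob p (frob n x).
Proof. by rewrite /frob -exprM -expnD. Qed.

Lemma frob_twice n x : frob (2 * n) x = frob n (frob n x).
Proof. by rewrite mul2n -addnn frob_add. Qed.

Lemma frob_thrice n x : frob (3 * n) x = frob n (frob n (frob n x)).
Proof. by rewrite mulSn frob_add frob_twice. Qed.

Definition qform (j : nat) (x y : R) : R := frob j x * x + x * frob j y + frob j y * y.

Definition qpolar (j : nat) (a b x y : R) : R :=
  a * frob j x + (frob j a + frob j b) * x + frob j b * y + (a + b) * frob j y.

Definition bform (j : nat) (x y : R) : R := frob j x * y + x * frob j y.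

Definition bpolar (j : nat) (a b x y : R) : R :=
  frob j x * b + frob j a * y + x * frob j b + a * frob j y.

Lemma qform_polarE j a b x y :
  qform j (x + a) (y + b) = qform j x y + qpolar j a b x y + qform j a b.
Proof. rewrite /qform /qpolar !frobD; ring. Qed.

Lemma bform_polarE j a b x y :
  bform j (x + a) (y + b) = bform j x y + bpolar j a b x y + bform j a b.
Proof. rewrite /bform /bpolar !frobD; ring. Qed.

Lemma qpolarD j a b x y x' y' :
  qpolar j a b (x + x') (y + y') = qpolar j a b x y + qpolar j a b x' y'.
Proof. rewrite /qpolar !frobD; ring. Qed.

Lemma bpolarD j a b x y x' y' :
  bpolar j a b (x + x') (y + y') = bpolar j a b x y + bpolar j a b x' y'.
Proof. rewrite /bpolar !frobD; ring. Qed.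

Lemma qform_comb j (a b g d t : R) :
  qform j (a * frob j t + b * t) (g * frob j t + d * t) =
  frob j t * (qform j a g * frob j (frob j t)
              + (frob j b * a + a * frob j d + frob j d * g) * frob j t + qform j b d * t)
  + frob j (frob j t) * t * (frob j a * b + b * frob j g + frob j g * d).
Proof. rewrite /qform !frobD !frobM; ring. Qed.
End Char2Ring.

Ltac char2_ring pchar2 :=
  let two0 := fresh "two0" in let three1 := fresh "three1" in
  let four0 := fresh "four0" in
  have [two0 three1 four0] := char2_consts pchar2; ring: two0 three1 four0.

(* Identities in indeterminates c, c1, c2, c3 (standing for c, c^[k], c^[2k],
   c^[3k]) used in the kernel computations. *)
Section PolynomialIdentities.
Variable R : comNzRingType.
Hypothesis pchar2 : 2 \in [pchar R].

(* nu x x^[j] = x^(2^j+1) + x + 1 is the value Q_j(x, 1). *)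
Definition nu (x y : R) : R := y * x + x + 1.

Lemma frob_nu n x y : frob n (nu x y) = nu (frob n x) (frob n y).
Proof. by rewrite /nu !(frobD pchar2) frobM frob1. Qed.

Lemma qpolar_shift j (c e y : R) :
  qpolar j c 1 (e + c * y) y
  = c * frob j e + (frob j c + 1) * e + nu c (frob j c) * (y + frob j y).
Proof. by rewrite /qpolar /nu !(frobD pchar2) frobM frob1; ring. Qed.

Lemma qpolar_shift_swap j (c e y : R) :
  qpolar j 1 c y (e + c * y)
  = (1 + c) * frob j e + frob j c * e + nu (frob j c) c * (y + frob j y).
Proof. by rewrite /qpolar /nu !(frobD pchar2) frobM frob1; ring. Qed.

Lemma bpolar_shift j (c e y : R) :
  bpolar j c 1 (e + c * y) y = e + frob j e + (c + frob j c) * (y + frob j y).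
Proof. by rewrite /bpolar !(frobD pchar2) frobM frob1; ring. Qed.

(* The q-linear polynomial in e obtained for f2 after eliminating y. *)
Definition lq (c c1 c2 c3 e e1 e2 e3 : R) : R :=
  nu c c1 * nu c1 c2 * nu c2 c * e3 + (c + c3) * nu c c1 * nu c3 c1 * e2
  + (c + c3) * nu c2 c3 * nu c2 c * e1 + nu c1 c2 * nu c2 c3 * nu c3 c1 * e.

Lemma lq_coefs (c c1 c2 c3 : R) :
  [/\ nu c2 c3 + (c + c3) * c2 = nu c2 c, nu c2 c3 * c1 + nu c1 c2 * (c3 + 1) = nu c3 c1,
      nu c1 c2 * c + nu c c1 * (c2 + 1) = nu c2 c & nu c c1 + (c + c3) * (c1 + 1) = nu c3 c1].
Proof. by rewrite /nu; split; char2_ring pchar2. Qed.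

Lemma lq_expand (c c1 c2 c3 e e1 e2 e3 : R) :
  nu c c1 * nu c1 c2 * nu c2 c3 * (e + e3)
  + (c + c3) * (nu c1 c2 * nu c2 c3 * (c * e1 + (c1 + 1) * e)
                + nu c c1 * nu c2 c3 * (c1 * e2 + (c2 + 1) * e1)
                + nu c c1 * nu c1 c2 * (c2 * e3 + (c3 + 1) * e2))
  = lq c c1 c2 c3 e e1 e2 e3.
Proof.
have [i3 i2 i1 i0] := lq_coefs c c1 c2 c3.
transitivity (nu c c1 * nu c1 c2 * (nu c2 c3 + (c + c3) * c2) * e3
  + (c + c3) * nu c c1 * (nu c2 c3 * c1 + nu c1 c2 * (c3 + 1)) * e2
  + (c + c3) * nu c2 c3 * (nu c1 c2 * c + nu c c1 * (c2 + 1)) * e1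
  + nu c1 c2 * nu c2 c3 * (nu c c1 + (c + c3) * (c1 + 1)) * e); first by ring.
by rewrite i3 i2 i1 i0.
Qed.

(* The middle coefficient of the relation satisfied by g (see lq_in_g). *)
Definition kappa (c c1 c2 c3 : R) : R :=
  c * c1 * c2 * c3 + c * c1 * c3 + c * c1 * c2 + c2 * c3 + c1 * c3 + c * c2 + c * c3
  + c1 * c2 + c + c1 + 1.

Lemma kappa_coefs (c c1 c2 c3 : R) :
  nu c1 c2 * nu c2 c * nu c3 c3 + nu c2 c3 * kappa c c1 c2 c3 = nu c2 c2 * (c + c3) * nu c3 c1 /\
  nu c c1 * kappa c c1 c2 c3 + nu c1 c2 * nu c3 c1 * nu c c = nu c1 c1 * (c + c3) * nu c2 c.
Proof. by rewrite /nu /kappa; split; char2_ring pchar2. Qed.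

(* Rewriting lq in the variable g = nu c c * e1 + nu c1 c1 * e and its
   Frobenius images: numerator of the relation used in f2_qlinear_kernel. *)
Lemma lq_in_g (c c1 c2 c3 e e1 e2 e3 : R) :
  nu c c1 * nu c1 c2 * nu c2 c * nu c1 c1 * (nu c2 c2 * e3 + nu c3 c3 * e2)
  + nu c c1 * nu c2 c3 * kappa c c1 c2 c3 * (nu c1 c1 * e2 + nu c2 c2 * e1)
  + nu c1 c2 * nu c2 c3 * nu c3 c1 * nu c2 c2 * (nu c c * e1 + nu c1 c1 * e)
  = nu c1 c1 * nu c2 c2 * lq c c1 c2 c3 e e1 e2 e3.
Proof.
have [k2 k1] := kappa_coefs c c1 c2 c3.
transitivity (nu c c1 * nu c1 c2 * nu c2 c * nu c1 c1 * nu c2 c2 * e3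
  + nu c c1 * nu c1 c1 * (nu c1 c2 * nu c2 c * nu c3 c3 + nu c2 c3 * kappa c c1 c2 c3) * e2
  + nu c2 c3 * nu c2 c2 * (nu c c1 * kappa c c1 c2 c3 + nu c1 c2 * nu c3 c1 * nu c c) * e1
  + nu c1 c2 * nu c2 c3 * nu c3 c1 * nu c2 c2 * nu c1 c1 * e); first by ring.
by rewrite k2 k1 /lq; ring.
Qed.
End PolynomialIdentities.

Section FiniteFieldChar2.
Variables (F : finFieldType) (m : nat).
Hypothesis cardF : #|F| = (2 ^ m)%N.

Lemma pchar2F : 2 \in [pchar F].
Proof. exact: card_finPcharP cardF (isT : prime 2). Qed.

Lemma frob_eq0 n (x : F) : (frob n x == 0) = (x == 0).
Proof. by rewrite /frob expf_eq0 expn_gt0. Qed.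

Lemma frobV n (x : F) : frob n x^-1 = (frob n x)^-1.
Proof. exact: exprVn. Qed.

Lemma frob_fixed_mul n j (x : F) : frob j x = x -> frob (n * j) x = x.
Proof. by move=> fx; elim: n => [|n IH]; rewrite ?mul0n // mulSn frob_add fx. Qed.

(* If gcd(j,m) = 1, the elements fixed by x |-> x^[j] are those of F_2:
   with u j = v m + 1 (Bezout), x = x^[u j] = (x^[v m])^2 = x^2. *)
Lemma frob_fixed_F2 j (x : F) : (0 < j)%N -> coprime j m -> frob j x = x -> x = 0 \/ x = 1.
Proof.
move=> j_gt0 co_jm fx.
have fmx : frob m x = x by rewrite /frob -cardF expf_card.
have [u v uj_eq _] := egcdnP m j_gt0.
rewrite (eqP co_jm) in uj_eq.
have x2 : x ^+ 2 = x.
  by rewrite -{2}(frob_fixed_mul u fx) uj_eq addn1 -[(v * m).+1]addn1 frob_add frob_fixed_mul.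
have : x * (x - 1) == 0 by rewrite mulrBr mulr1 -expr2 x2 subrr.
by rewrite mulf_eq0 subr_eq0 => /orP [] /eqP; [left | right].
Qed.

Section Anisotropy.
Variable j : nat.
Hypotheses (j_gt0 : (0 < j)%N) (co3j : coprime (3 * j) m).

(* Q_j(d, 1) = d^(2^j+1) + d + 1 never vanishes.  A root d satisfies
   d^[j] = 1 + 1/d; as d |-> 1 + 1/d has order 3 and commutes with Frobenius,
   d^[3j] = d, so d lies in F_2, where Q_j(d, 1) = 1. *)
Lemma nu_frob_neq0 (d : F) : nu d (frob j d) != 0.
Proof.
have pchar2 := pchar2F.
apply/eqP => N0.
set t := frob j d; set u := frob j t; set v := frob j u.
have td : t * d = d + 1 by apply: (char2_eq pchar2); rewrite addrA; exact: N0.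
have frob_eq (a b : F) : a * b = b + 1 -> frob j a * frob j b = frob j b + 1.
  by move=> ab; rewrite -frobM ab (frobD pchar2) frob1.
have ut : u * t = t + 1 := frob_eq _ _ td.
have vu : v * u = u + 1 := frob_eq _ _ ut.
have t1d : (t + 1) * d = 1 by rewrite mulrDl td mul1r; char2_ring pchar2.
have vt1 : v * (t + 1) = 1 by rewrite -ut mulrA vu mulrDl mul1r ut; char2_ring pchar2.
have t1_neq0 : t + 1 != 0 by apply: contra_eq_neq t1d => ->; rewrite mul0r eq_sym oner_neq0.
have vd : frob (3 * j) d = d.
  by rewrite frob_thrice; apply: (mulIf t1_neq0); rewrite [d * _]mulrC t1d.
have j3_gt0 : (0 < 3 * j)%N by rewrite muln_gt0 j_gt0.
have : nu d t = 1.
  rewrite /nu /t; case: (frob_fixed_F2 j3_gt0 co3j vd) => ->;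
  by rewrite ?frob0 ?frob1; char2_ring pchar2.
by rewrite N0 => /eqP; rewrite eq_sym oner_eq0.
Qed.

(* Q_j is anisotropic: Q_j(u, v) = v^(2^j+1) Q_j(u/v, 1) when v <> 0. *)
Lemma qform_anisotropic (u v : F) : qform j u v = 0 -> u = 0 /\ v = 0.
Proof.
have [-> | v_neq0] := eqVneq v 0.
  rewrite /qform frob0 !mulr0 !addr0 => /eqP.
  by rewrite mulf_eq0 frob_eq0 orbb => /eqP.
have fv_neq0 : frob j v != 0 by rewrite frob_eq0.
have -> : qform j u v = frob j v * v * nu (u / v) (frob j (u / v)).
  rewrite /qform /nu frobM frobV.
  by field; rewrite fv_neq0 v_neq0.
by move/eqP; rewrite !mulf_eq0 (negbTE fv_neq0) (negbTE v_neq0) (negbTE (nu_frob_neq0 _)).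
Qed.

(* A q-linear relation A t^[2j] + B t^[j] + C t = 0 whose coefficients are
   A = Q_j(a,g), B = the mixed term, C = Q_j(b,d) has only the root t = 0,
   provided the second mixed term vanishes and ad + bg <> 0: then
   Q_j(a t^[j] + b t, g t^[j] + d t) = 0, so both arguments vanish. *)
Lemma qform_relation_trivial (a b g d t : F) :
  frob j a * b + b * frob j g + frob j g * d = 0 ->
  a * d + b * g != 0 ->
  qform j a g * frob j (frob j t) + (frob j b * a + a * frob j d + frob j d * g) * frob j t
    + qform j b d * t = 0 ->
  t = 0.
Proof.
have pchar2 := pchar2F.
move=> cross0 det_neq0 rel.
set u := a * frob j t + b * t; set v := g * frob j t + d * t.
have : qform j u v = 0 by rewrite (qform_comb pchar2) rel cross0 !mulr0 addr0.
case/qform_anisotropic => u0 v0.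
have det_t : (a * d + b * g) * t = g * u + a * v by rewrite /u /v; char2_ring pchar2.
by move/eqP: det_t; rewrite u0 v0 !mulr0 addr0 mulf_eq0 (negbTE det_neq0) => /eqP.
Qed.
End Anisotropy.
End FiniteFieldChar2.

Section QuadraticCriterion.
Variable F : finFieldType.
Hypothesis pchar2 : 2 \in [pchar F].

Definition rot (z : F * F) : F * F := (z.2, z.1 + z.2).

Definition polar (f : F * F -> F * F) (a z : F * F) : F * F := f (z + a) + f z + f a.

Lemma rotE (x y : F) : rot (x, y) = (y, x + y).
Proof. by []. Qed.

Lemma pair_addE (x y x' y' : F) : (x, y) + (x', y') = (x + x', y + y').
Proof. by []. Qed.

Lemma pair_addrr (z : F * F) : z + z = 0.
Proof. by case: z => x y; rewrite pair_addE !(addrr_pchar2 pchar2). Qed.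

Lemma pair_char2_eq (u v : F * F) : u + v = 0 -> u = v.
Proof. by move=> uv; rewrite -[u]addr0 -(pair_addrr v) addrA uv add0r. Qed.

Lemma rotD z w : rot (z + w) = rot z + rot w.
Proof. by case: z w => [x y] [x' y']; rewrite /rot /= pair_addE; congr pair; ring. Qed.

Lemma rot3 z : rot (rot (rot z)) = z.
Proof. by case: z => x y; rewrite /rot /=; congr pair; char2_ring pchar2. Qed.

Lemma rot_sum z : z + rot z = rot (rot z).
Proof. by case: z => x y; rewrite /rot /= pair_addE; congr pair; char2_ring pchar2. Qed.

Lemma rot_sum2 z : z + rot (rot z) = rot z.
Proof. by rewrite -{1}[z]rot3 -rot_sum -addrA pair_addrr addr0. Qed.

Lemma rot_eq0 z : rot z = 0 -> z = 0.
Proof. by case: z => x y [-> ]; rewrite addr0 => ->. Qed.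

Lemma rot_neq z : z != 0 -> rot z != z.
Proof.
case: z => x y; apply: contra => /eqP [yx xyy].
have x0 : x = 0 by apply: (addIr y); rewrite xyy add0r.
by rewrite yx x0.
Qed.

Section Criterion.
Variable f : F * F -> F * F.
Variables wt1 wt2 : F -> F.
Hypothesis polarD : forall a w w', polar f a (w + w') = polar f a w + polar f a w'.
Hypothesis f_rot : forall z, f (rot z) = f z.
Hypothesis f_hom : forall t x y,
  f (t * x, t * y) = (wt1 t * (f (x, y)).1, wt2 t * (f (x, y)).2).
Hypothesis polar_ker1 : forall c w, polar f (c, 1) w = 0 -> w = 0 \/ w = (c, 1).

(* Additivity of D_0 forces D_0(0) = f(0) to vanish. *)
Lemma f_zero : f 0 = 0.
Proof.
have p0 : polar f 0 0 = 0.
  by apply: (addIr (polar f 0 0)); rewrite -polarD addr0 add0r.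
by move: p0; rewrite /polar addr0 -addrA pair_addrr addr0.
Qed.

Lemma polar_rot a w : polar f (rot a) (rot w) = polar f a w.
Proof. by rewrite /polar -rotD !f_rot. Qed.

Lemma polar_scale t a1 a2 x y : polar f (a1, a2) (x, y) = 0 ->
  polar f (t * a1, t * a2) (t * x, t * y) = 0.
Proof.
rewrite /polar !pair_addE -!mulrDr !f_hom.
case: (f (x + a1, y + a2)) (f (x, y)) (f (a1, a2)) => [u1 u2] [v1 v2] [w1 w2] /=.
by rewrite !pair_addE -!mulrDr => -[-> ->]; rewrite !mulr0.
Qed.

(* Scaling by 1/a2 reduces a direction with a2 <> 0 to one of the form (c, 1). *)
Lemma polar_ker_snd a1 a2 w : a2 != 0 -> polar f (a1, a2) w = 0 -> w = 0 \/ w = (a1, a2).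
Proof.
case: w => x y a2_neq0 /(polar_scale a2^-1); rewrite mulVf //.
have t_neq0 : a2^-1 != 0 by rewrite invr_eq0.
case/polar_ker1 => [[tx0 ty0] | [tx ty1]]; [left | right]; congr pair;
  apply: (mulfI t_neq0); by rewrite ?mulr0 ?mulVf.
Qed.

(* Directions (a1, 0) are handled through rot (a1, 0) = (0, a1). *)
Lemma polar_ker a w : a != 0 -> polar f a w = 0 -> w = 0 \/ w = a.
Proof.
case: a => a1 a2 a_neq0.
have [a2_0 | a2_neq0] := eqVneq a2 0; last exact: polar_ker_snd.
have a1_neq0 : a1 + a2 != 0 by apply: contra a_neq0; rewrite a2_0 addr0 => /eqP ->.
rewrite -polar_rot => /(polar_ker_snd a1_neq0) [/rot_eq0 -> | rw]; first by left.
by right; rewrite -[w]rot3 rw rot3.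
Qed.

Lemma polar_solutions a z z' : a != 0 ->
  f (z' + a) + f z' = f (z + a) + f z -> z' = z \/ z' = z + a.
Proof.
move=> a_neq0 same.
have : polar f a (z + z') = 0 by rewrite polarD /polar same pair_addrr.
case/(polar_ker a_neq0) => [/pair_char2_eq -> | zz']; [by left | right].
by rewrite -zz' addrA pair_addrr add0r.
Qed.

Lemma apn : APN2 f.
Proof.
move=> a b a_neq0.
have [-> | [z0]] := set_0Vmem [set z : F * F | f (z + a) + f z == b].
  by rewrite cards0.
rewrite inE => /eqP fz0.
have sub : [set z : F * F | f (z + a) + f z == b] \subset [set z0; z0 + a].
  apply/subsetP => z; rewrite !inE => /eqP fz.
  by have [-> | ->] := polar_solutions a_neq0 (etrans fz (esym fz0)); rewrite eqxx ?orbT.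
by rewrite (leq_trans (subset_leq_card sub)) // cards2; case: (_ != _).
Qed.

(* The fibres of f are the rot-orbits: with a = w + z, both z and rot a solve
   f(s + a) + f(s) = 0, so z is rot a or rot^2 a. *)
Lemma fibre_rot z w : f w = f z -> [\/ w = z, w = rot z | w = rot (rot z)].
Proof.
move=> fwz; set a := w + z.
have wE : w = z + a by rewrite /a addrC -addrA pair_addrr addr0.
have [a0 | a_neq0] := eqVneq a 0; first by apply: Or31; rewrite wE a0 addr0.
have : f (z + a) + f z = f (rot a + a) + f (rot a).
  by rewrite -wE fwz pair_addrr (addrC (rot a)) rot_sum !f_rot pair_addrr.
case/(polar_solutions a_neq0) => za.
  have az : a = rot (rot z) by rewrite za rot3.
  by apply: Or32; rewrite wE az rot_sum2.
have az : a = rot z by rewrite za addrC rot_sum rot3.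
by apply: Or33; rewrite wE az rot_sum.
Qed.

Lemma almost3 : almost_3_to_1 f.
Proof.
have rot0 : rot 0 = 0 by rewrite /rot /= addr0.
exists 0; split.
- by rewrite -f_zero codom_f.
- have -> : [set z | f z == 0] = [set 0 : F * F].
    apply/setP => z; rewrite !inE; apply/eqP/eqP => [fz | ->]; last exact: f_zero.
    by have [] := fibre_rot (etrans fz (esym f_zero)); rewrite ?rot0.
  by rewrite cards1.
move=> y /codomP [z ->] fz_neq0.
have z_neq0 : z != 0 by apply: contra_neq fz_neq0 => ->; rewrite f_zero.
have rz_neq0 : rot z != 0 by apply: contra z_neq0 => /eqP/rot_eq0 ->.
have ne1 : z != rot z by rewrite eq_sym rot_neq.
have ne2 : rot z != rot (rot z) by rewrite eq_sym rot_neq.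
have ne3 : z != rot (rot z).
  by apply: contra ne1 => /eqP rrz; apply/eqP; rewrite {2}rrz rot3.
have -> : [set w | f w == f z] = [set z; rot z; rot (rot z)].
  apply/setP => w; rewrite !inE; apply/eqP/idP => [/fibre_rot [] -> | ];
    rewrite ?eqxx ?orbT //.
  by move=> /orP [/orP [] | ] /eqP ->; rewrite ?f_rot.
by rewrite setUC !cardsU1 cards1 !inE eq_sym (negbTE ne3) eq_sym (negbTE ne2) (negbTE ne1).
Qed.

Lemma quadratic_criterion : almost_3_to_1 f /\ APN2 f.
Proof. exact: (conj almost3 apn). Qed.
End Criterion.
End QuadraticCriterion.

Section TheMaps.
Variables (F : finFieldType) (k : nat).
Hypothesis pchar2 : 2 \in [pchar F].

Lemma f1E (x y : F) : f1 k (x, y) = (qform k x y, qform (2 * k) y x).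
Proof. by rewrite /f1 /qform /frob !exprD !expr1; congr pair; ring. Qed.

Lemma f2E (x y : F) : f2 k (x, y) = (qform k x y, bform (3 * k) x y).
Proof. by rewrite /f2 /qform /bform /frob !exprD !expr1; congr pair; ring. Qed.

Lemma polar_f1 (a w : F * F) :
  polar (f1 k) a w = (qpolar k a.1 a.2 w.1 w.2, qpolar (2 * k) a.2 a.1 w.2 w.1).
Proof.
case: a w => [a1 a2] [x y]; rewrite /polar (@pair_addE F x y a1 a2) !f1E.
by rewrite !(qform_polarE pchar2) !(@pair_addE F) /=; congr pair; char2_ring pchar2.
Qed.

Lemma polar_f2 (a w : F * F) :
  polar (f2 k) a w = (qpolar k a.1 a.2 w.1 w.2, bpolar (3 * k) a.1 a.2 w.1 w.2).
Proof.
case: a w => [a1 a2] [x y]; rewrite /polar (@pair_addE F x y a1 a2) !f2E.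
rewrite (qform_polarE pchar2) (bform_polarE pchar2) !(@pair_addE F) /=.
by congr pair; char2_ring pchar2.
Qed.

Lemma polar_f1D (a w w' : F * F) :
  polar (f1 k) a (w + w') = polar (f1 k) a w + polar (f1 k) a w'.
Proof. by case: w w' => [x y] [x' y']; rewrite !polar_f1 (@pair_addE F) !(qpolarD pchar2). Qed.

Lemma polar_f2D (a w w' : F * F) :
  polar (f2 k) a (w + w') = polar (f2 k) a w + polar (f2 k) a w'.
Proof.
by case: w w' => [x y] [x' y']; rewrite !polar_f2 (@pair_addE F) (qpolarD pchar2) (bpolarD pchar2).
Qed.

Lemma f1_rot (z : F * F) : f1 k (rot z) = f1 k z.
Proof.
case: z => x y; rewrite (@rotE F) !f1E /qform !(frobD pchar2).
by congr pair; char2_ring pchar2.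
Qed.

Lemma f2_rot (z : F * F) : f2 k (rot z) = f2 k z.
Proof.
case: z => x y; rewrite (@rotE F) !f2E /qform /bform !(frobD pchar2).
by congr pair; char2_ring pchar2.
Qed.

Lemma f1_hom (t x y : F) : f1 k (t * x, t * y) =
  (frob k t * t * (f1 k (x, y)).1, frob (2 * k) t * t * (f1 k (x, y)).2).
Proof. by rewrite !f1E /= /qform !frobM; congr pair; ring. Qed.

Lemma f2_hom (t x y : F) : f2 k (t * x, t * y) =
  (frob k t * t * (f2 k (x, y)).1, frob (3 * k) t * t * (f2 k (x, y)).2).
Proof. by rewrite !f2E /= /qform /bform !frobM; congr pair; ring. Qed.
End TheMaps.

Section Kernels.
Variables (F : finFieldType) (m k : nat).
Hypotheses (cardF : #|F| = (2 ^ m)%N) (k_gt0 : (0 < k)%N) (co3k : coprime (3 * k) m).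

Let pchar2 : 2 \in [pchar F] := pchar2F cardF.

Let cokm : coprime k m.
Proof. by move: co3k; rewrite coprimeMl => /andP []. Qed.

Let nu_neq0 (d : F) : nu d (frob k d) != 0 := nu_frob_neq0 cardF k_gt0 co3k d.

(* Common last step: once x = c y, the first polar equation reads
   nu(c) (y + y^[k]) = 0, so y is 0 or 1. *)
Lemma kernel_shift0 (c x y : F) :
  qpolar k c 1 x y = 0 -> x + c * y = 0 -> (x, y) = 0 \/ (x, y) = (c, 1).
Proof.
move=> E1 /(char2_eq pchar2) xE.
rewrite xE -[c * y]add0r (qpolar_shift pchar2) frob0 !mulr0 !add0r in E1.
move/eqP: E1; rewrite mulf_eq0 (negbTE (nu_neq0 c)) /= => /eqP.
move/(char2_eq pchar2)/esym/(frob_fixed_F2 cardF k_gt0 cokm) => y01.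
by move: xE; case: y01 => -> ->; rewrite ?mulr0 ?mulr1; [left | right].
Qed.

(* For f1, with x = e + c y and w = y + y^[k], the two equations give
   nu(c) w = c e^[k] + (c^[k] + 1) e and
   nu(c^[2k], c) (w + w^[k]) = (1 + c) e^[2k] + c^[2k] e;
   eliminating w yields nu(c)^2 e^[2k] + nu(c^[2k], c)^2 e^[k] + nu(c^[k])^2 e = 0
   (nu(x) := nu x x^[k]), an anisotropic relation with
   (a, b, g, d) = (c^2, 1, 1, (c^[k])^2 + 1). *)
Lemma kernel_f1 (c x y : F) :
  qpolar k c 1 x y = 0 -> qpolar (2 * k) 1 c y x = 0 -> (x, y) = 0 \/ (x, y) = (c, 1).
Proof.
move=> E1 E2.
have [e xE] : exists e, x = e + c * y.
  by exists (x + c * y); rewrite -addrA (addrr_pchar2 pchar2) addr0.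
suff e0 : e = 0 by apply: (kernel_shift0 E1); rewrite xE e0 add0r (addrr_pchar2 pchar2).
rewrite xE (qpolar_shift pchar2) in E1.
rewrite xE (qpolar_shift_swap pchar2) !frob_twice in E2.
set c1 := frob k c in E1 E2 *; set c2 := frob k c1 in E2 *.
set e1 := frob k e in E1 E2 *; set e2 := frob k e1 in E2 *.
set y1 := frob k y in E1 E2 *; set y2 := frob k y1 in E2 *.
have h1 := char2_eq pchar2 E1; have h2 := char2_eq pchar2 E2.
have h1q : c1 * e2 + (c2 + 1) * e1 = nu c1 c2 * (y1 + y2).
  by have := congr1 (frob k) h1; rewrite !((frobD pchar2), frobM, frob1, (frob_nu pchar2)).
have elim_w : nu c c1 * nu c1 c2 * ((1 + c) * e2 + c2 * e)
  = nu c2 c * nu c1 c2 * (c * e1 + (c1 + 1) * e) + nu c2 c * nu c c1 * (c1 * e2 + (c2 + 1) * e1).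
  rewrite h1 h1q h2 (_ : y + y2 = (y + y1) + (y1 + y2)); first ring.
  by char2_ring pchar2.
have T : nu c c1 ^+ 2 * e2 + nu c2 c ^+ 2 * e1 + nu c1 c2 ^+ 2 * e = 0.
  rewrite (_ : _ + _ = nu c c1 * nu c1 c2 * ((1 + c) * e2 + c2 * e)
    + (nu c2 c * nu c1 c2 * (c * e1 + (c1 + 1) * e)
       + nu c2 c * nu c c1 * (c1 * e2 + (c2 + 1) * e1))).
    by rewrite elim_w (addrr_pchar2 pchar2).
  by rewrite /nu; char2_ring pchar2.
apply: (qform_relation_trivial cardF k_gt0 co3k
          (a := c * c) (b := 1) (g := 1) (d := c1 * c1 + 1)).
- by rewrite !((frobD pchar2), frobM, frob1) -/c1; char2_ring pchar2.
- rewrite (_ : c * c * (c1 * c1 + 1) + 1 * 1 = nu c c1 ^+ 2); first by rewrite sqrf_eq0.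
  by rewrite /nu; char2_ring pchar2.
- rewrite -[RHS]T /qform !((frobD pchar2), frobM, frob1) -/c1 -/c2 -/e1 -/e2.
  by rewrite /nu; char2_ring pchar2.
Qed.

Section OddDegree.
Hypothesis m_odd : odd m.

(* For m odd, F has no primitive cube root of unity. *)
Lemma nu_sq_neq0 (d : F) : nu d d != 0.
Proof.
apply/eqP => D0.
have d2 : d * d = d + 1 by apply: (char2_eq pchar2); rewrite addrA; exact: D0.
have d4 : frob 2 d = d.
  rewrite /frob (_ : (2 ^ 2 = 2 * 2)%N) // exprM !expr2 d2 mulrDl mulrDr d2.
  by char2_ring pchar2.
have co2m : coprime 2 m by rewrite coprime2n m_odd.
have : nu d d = 1.
  by rewrite /nu; case: (frob_fixed_F2 cardF (isT : (0 < 2)%N) co2m d4) => ->; char2_ring pchar2.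
by rewrite D0 => /eqP; rewrite eq_sym oner_eq0.
Qed.

(* nu(c^[2k], c) = c^(2^2k+1) nu(1/c) for the exponent 2k, and gcd(6k,m) = 1. *)
Lemma nu_frob2_neq0 (c : F) : nu (frob (2 * k) c) c != 0.
Proof.
have co6k : coprime (3 * (2 * k)) m by rewrite mulnCA coprimeMl coprime2n m_odd co3k.
have k2_gt0 : (0 < 2 * k)%N by rewrite muln_gt0.
have [-> | c_neq0] := eqVneq c 0; first by rewrite /nu frob0 !mul0r !add0r oner_eq0.
set c2 := frob (2 * k) c; have c2_neq0 : c2 != 0 by rewrite frob_eq0.
have := nu_frob_neq0 cardF k2_gt0 co6k c^-1; rewrite frobV -/c2; apply: contra => /eqP M0.
have -> : nu c^-1 c2^-1 = nu c2 c / (c * c2) by rewrite /nu; field; rewrite c_neq0 c2_neq0.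
by rewrite M0 mul0r.
Qed.

(* lq(e) = 0 implies g := nu(c,c) e^[k] + nu(c^[k],c^[k]) e = 0: the rescaled
   h = g / nu(c) satisfies an anisotropic relation with
   (a, b, g, d) = (1 + c + c^[k], 1 + c^[k] c^[2k], 1 + c c^[k], c^[k] + c^[2k] + c^[k] c^[2k]). *)
Lemma f2_qlinear_kernel (c e : F) :
  let c1 := frob k c in let c2 := frob k c1 in let c3 := frob k c2 in
  let e1 := frob k e in let e2 := frob k e1 in let e3 := frob k e2 in
  lq c c1 c2 c3 e e1 e2 e3 = 0 -> nu c c * e1 + nu c1 c1 * e = 0.
Proof.
move=> c1 c2 c3 e1 e2 e3 L0.
have m0_neq0 : nu c2 c != 0 by rewrite /c2 /c1 -frob_twice nu_frob2_neq0.
have d1_neq0 : nu c1 c1 != 0 := nu_sq_neq0 c1.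
set h := (nu c c * e1 + nu c1 c1 * e) / nu c c1.
suff : h = 0 by move/eqP; rewrite mulf_eq0 invr_eq0 (negbTE (nu_neq0 c)) orbF => /eqP.
have h1E : frob k h = (nu c1 c1 * e2 + nu c2 c2 * e1) / nu c1 c2.
  by rewrite /h frobM frobV !((frobD pchar2), frobM, (frob_nu pchar2)).
have h2E : frob k (frob k h) = (nu c2 c2 * e3 + nu c3 c3 * e2) / nu c2 c3.
  by rewrite h1E frobM frobV !((frobD pchar2), frobM, (frob_nu pchar2)).
have rel : nu c2 c * nu c1 c1 * frob k (frob k h) + kappa c c1 c2 c3 * frob k h
           + nu c3 c1 * nu c2 c2 * h = 0.
  have := lq_in_g pchar2 c c1 c2 c3 e e1 e2 e3; rewrite L0 mulr0 => num0.
  rewrite h2E h1E /h -[RHS](mul0r (nu c c1 * nu c1 c2 * nu c2 c3)^-1) -num0.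
  by field; rewrite !nu_neq0.
clearbody h.
apply: (qform_relation_trivial cardF k_gt0 co3k
          (a := 1 + c + c1) (b := 1 + c1 * c2) (g := 1 + c * c1) (d := c1 + c2 + c1 * c2)).
- by rewrite !((frobD pchar2), frobM, frob1) -/c1 -/c2 -/c3; char2_ring pchar2.
- rewrite (_ : _ * _ + _ * _ = nu c2 c * nu c1 c1) ?mulf_neq0 //.
  by rewrite /nu; char2_ring pchar2.
- rewrite -[RHS]rel /qform !((frobD pchar2), frobM, frob1) -/c1 -/c2 -/c3.
  by rewrite /nu /kappa; char2_ring pchar2.
Qed.

(* From g = 0, s = e / nu(c,c) is fixed by x |-> x^[k], so e = 0 or e = nu(c,c);
   in the latter case z = y + c satisfies z + z^[k] = 1, hence z^[2k] = z,
   so z lies in F_2 (gcd(2k,m) = 1), a contradiction. *)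
Lemma f2_shift_trivial (c e y : F) :
  let c1 := frob k c in let e1 := frob k e in let y1 := frob k y in
  c * e1 + (c1 + 1) * e = nu c c1 * (y + y1) -> nu c c * e1 + nu c1 c1 * e = 0 -> e = 0.
Proof.
move=> c1 e1 y1 h1 /(char2_eq pchar2) g0.
have d0_neq0 : nu c c != 0 := nu_sq_neq0 c.
have d1_neq0 : nu c1 c1 != 0 := nu_sq_neq0 c1.
have fs : frob k (e / nu c c) = e / nu c c.
  rewrite frobM frobV (frob_nu pchar2) -/c1 -/e1.
  have e1E : e1 = nu c1 c1 * e / nu c c by rewrite -g0 mulrC mulKf.
  by rewrite e1E; field; rewrite d0_neq0 d1_neq0.
have [s0 | s1] := frob_fixed_F2 cardF k_gt0 cokm fs.
  by move/eqP: s0; rewrite mulf_eq0 invr_eq0 (negbTE d0_neq0) orbF => /eqP.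
have eE : e = nu c c by rewrite -[e](divfK d0_neq0) s1 mul1r.
have e1E : e1 = nu c1 c1 by rewrite /e1 eE (frob_nu pchar2).
have w : y + y1 = 1 + c + c1.
  apply: (mulfI (nu_neq0 c)); rewrite -h1 e1E eE /nu.
  by rewrite -/c1; char2_ring pchar2.
set z := y + c.
have zz : z + frob k z = 1.
  rewrite /z (frobD pchar2) -/y1 -/c1 (_ : y + c + (y1 + c1) = (y + y1) + c + c1); last by ring.
  by rewrite w; char2_ring pchar2.
have zz1 := congr1 (frob k) zz; rewrite (frobD pchar2) frob1 in zz1.
have z2 : frob (2 * k) z = z.
  by rewrite frob_twice; apply: (addrI (frob k z)); rewrite zz1 addrC zz.
have co2k : coprime (2 * k) m by rewrite coprimeMl coprime2n m_odd cokm.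
have k2_gt0 : (0 < 2 * k)%N by rewrite muln_gt0.
have : z + frob k z = 0.
  by case: (frob_fixed_F2 cardF k2_gt0 co2k z2) => ->; rewrite ?frob0 ?frob1; char2_ring pchar2.
by rewrite zz => /eqP; rewrite oner_eq0.
Qed.

(* For f2, with x = e + c y the second equation reads
   e + e^[3k] = (c + c^[3k]) (y + y^[3k]); substituting the Frobenius images
   of the first equation for the y-terms gives lq(e) = 0. *)
Lemma kernel_f2 (c x y : F) :
  qpolar k c 1 x y = 0 -> bpolar (3 * k) c 1 x y = 0 -> (x, y) = 0 \/ (x, y) = (c, 1).
Proof.
move=> E1 E2.
have [e xE] : exists e, x = e + c * y.
  by exists (x + c * y); rewrite -addrA (addrr_pchar2 pchar2) addr0.
suff e0 : e = 0 by apply: (kernel_shift0 E1); rewrite xE e0 add0r (addrr_pchar2 pchar2).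
rewrite xE (qpolar_shift pchar2) in E1.
rewrite xE (bpolar_shift pchar2) !frob_thrice in E2.
set c1 := frob k c in E1 E2 *; set c2 := frob k c1 in E2 *; set c3 := frob k c2 in E2 *.
set e1 := frob k e in E1 E2 *; set e2 := frob k e1 in E2 *; set e3 := frob k e2 in E2 *.
set y1 := frob k y in E1 E2 *; set y2 := frob k y1 in E2 *; set y3 := frob k y2 in E2 *.
have h1 := char2_eq pchar2 E1; have h2 := char2_eq pchar2 E2.
have h1q : c1 * e2 + (c2 + 1) * e1 = nu c1 c2 * (y1 + y2).
  by have := congr1 (frob k) h1; rewrite !((frobD pchar2), frobM, frob1, (frob_nu pchar2)).
have h1Q : c2 * e3 + (c3 + 1) * e2 = nu c2 c3 * (y2 + y3).
  by have := congr1 (frob k) h1q; rewrite !((frobD pchar2), frobM, frob1, (frob_nu pchar2)).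
apply: (f2_shift_trivial h1); apply: f2_qlinear_kernel.
rewrite -/c1 -/c2 -/c3 -/e1 -/e2 -/e3 -(lq_expand pchar2) h2 h1 h1q h1Q.
by char2_ring pchar2.
Qed.
End OddDegree.
End Kernels.

Local Close Scope ring_scope.

Theorem theorem4p8 (F : finFieldType) (m k : nat) :
  (0 < m)%N -> (0 < k)%N -> #|F| = (2 ^ m)%N ->
  (gcdn (3 * k) m = 1%N -> almost_3_to_1 (f1 (F:=F) k) /\ APN2 (f1 (F:=F) k)) /\
  (gcdn (3 * k) m = 1%N -> odd m -> almost_3_to_1 (f2 (F:=F) k) /\ APN2 (f2 (F:=F) k)).
Proof.
move=> _ k_gt0 cardF; have pchar2 := pchar2F cardF.
split=> [co3k | co3k m_odd]; move/eqP in co3k.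
- apply: (quadratic_criterion pchar2 (polar_f1D k pchar2) (f1_rot k pchar2) (@f1_hom F k)).
  move=> c [x y]; rewrite (polar_f1 k pchar2) => -[E1 E2].
  exact: kernel_f1 cardF k_gt0 co3k c x y E1 E2.
- apply: (quadratic_criterion pchar2 (polar_f2D k pchar2) (f2_rot k pchar2) (@f2_hom F k)).
  move=> c [x y]; rewrite (polar_f2 k pchar2) => -[E1 E2].
  exact: kernel_f2 cardF k_gt0 co3k m_odd c x y E1 E2.
Qed.
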